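(* For any time warps $f,g$: (a) $f\backslash g=f^{r}g\vee(\top f)^{r}\vee g^{o}$; (b) $g/f=g f^{\ell}\vee (f^{\ell})^{o}$.
   Context: Let $\overline{\omega}=\omega\cup\{\omega\}$ be the natural numbers with a top element $\omega$ adjoined, with its natural total order. A time warp is a monotone map $f\colon\overline{\omega}\to\overline{\omega}$ with $f(0)=0$ and $f(\omega)=\bigvee\{f(n)\mid n\in\omega\}$. The set $W$ of time warps is ordered pointwise, with $\vee$ the pointwise join and $fg:=f\circ g$; $\mathrm{id}$ is the identity and $\top$ maps every $p\ne0$ to $\omega$ and $0$ to $0$. The residuals $\backslash,/$ are the binary operations on $W$ satisfying, for all $f,g,h\in W$: $f\le h/g \iff fg\le h \iff g\le f\backslash h$. For a time warp $f$ define $f^{\ell}:=\mathrm{id}/f$, $f^{r}:=f\backslash\mathrm{id}$, and $f^{o}:=\top\backslash f$. *)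

From Stdlib Require Import Arith Lia Classical.

Inductive onat : Type := fin : nat -> onat | om : onat.

Definition ole (x y : onat) : Prop :=
  match x, y with
  | _, om => True
  | fin a, fin b => a <= b
  | om, fin _ => False
  end.

Definition omax (x y : onat) : onat :=
  match x, y with
  | fin a, fin b => fin (Nat.max a b)
  | _, _ => om
  end.

Definition is_sup (a : nat -> onat) (s : onat) : Prop :=
  (forall n, ole (a n) s) /\ (forall u, (forall n, ole (a n) u) -> ole s u).

Record timewarp (f : onat -> onat) : Prop := {
  tw_mono : forall x y, ole x y -> ole (f x) (f y);
  tw_zero : f (fin 0) = fin 0;
  tw_sup  : is_sup (fun n => f (fin n)) (f om)
}.

Record W : Type := mkW { wfun :> onat -> onat; wtw : timewarp wfun }.

Definition Wle (f g : W) : Prop := forall x, ole (f x) (g x).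

Lemma ole_refl x : ole x x.
Proof. destruct x; simpl; auto. Qed.

Lemma ole_trans x y z : ole x y -> ole y z -> ole x z.
Proof. destruct x, y, z; simpl; intros; auto; try lia; contradiction. Qed.

Lemma id_tw : timewarp (fun x => x).
Proof.
  split; auto. split; [intros; exact I|].
  intros [m|] H; simpl; auto. specialize (H (S m)); simpl in H; lia.
Qed.

Definition topf (x : onat) : onat :=
  match x with fin 0 => fin 0 | _ => om end.

Lemma top_tw : timewarp topf.
Proof.
  split; auto.
  - intros [[|a]|] [[|b]|]; simpl; auto; lia.
  - split; [intros [|n]; exact I|]. intros u H. specialize (H 1). exact H.
Qed.

Lemma omax_le x y u : ole x u -> ole y u -> ole (omax x y) u.
Proof. destruct x, y, u; simpl; auto; lia. Qed.

Lemma join_tw f g : timewarp f -> timewarp g -> timewarp (fun x => omax (f x) (g x)).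
Proof.
  intros [fm f0 [fs1 fs2]] [gm g0 [gs1 gs2]]. split.
  - intros x y Hxy. specialize (fm _ _ Hxy). specialize (gm _ _ Hxy).
    destruct (f x), (f y), (g x), (g y); simpl in *; auto; lia.
  - rewrite f0, g0. reflexivity.
  - split.
    + intros n. specialize (fs1 n). specialize (gs1 n). simpl in *.
      destruct (f (fin n)), (g (fin n)), (f om), (g om); simpl in *; auto; lia.
    + intros u H. apply omax_le.
      * apply fs2. intros n. specialize (H n).
        destruct (f (fin n)), (g (fin n)), u; simpl in *; auto; lia.
      * apply gs2. intros n. specialize (H n).
        destruct (f (fin n)), (g (fin n)), u; simpl in *; auto; lia.
Qed.

Lemma comp_tw f g : timewarp f -> timewarp g -> timewarp (fun x => f (g x)).
Proof.
  intros Hf Hg. destruct Hf as [fm f0 [fs1 fs2]], Hg as [gm g0 [gs1 gs2]]. split.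
  - intros x y H. apply fm, gm, H.
  - rewrite g0. exact f0.
  - split.
    + intros n. apply fm. apply gs1.
    + intros u H. destruct (g om) as [m|] eqn:Eg.
      * assert (Ex : exists n, g (fin n) = fin m).
        { apply NNPP. intros Hn.
          assert (Hlt : forall n, ole (g (fin n)) (fin (m - 1))).
          { intros n. specialize (gs1 n). try rewrite Eg in gs1.
            destruct (g (fin n)) as [a|] eqn:Ea; simpl in *; [|contradiction].
            destruct (Nat.eq_dec a m) as [->|]; [exfalso; apply Hn; eauto|lia]. }
          specialize (gs2 _ Hlt). try rewrite Eg in gs2. simpl in gs2.
          destruct m as [|m]; [apply Hn; exists 0; exact g0|]. simpl in gs2. lia. }
        destruct Ex as [n En]. specialize (H n). simpl in H. rewrite En in H. exact H.
      * apply fs2. intros k.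
        assert (Ex : exists n, ole (fin k) (g (fin n))).
        { apply NNPP. intros Hn.
          assert (Hle : forall n, ole (g (fin n)) (fin k)).
          { intros n. destruct (g (fin n)) as [a|] eqn:Ea; simpl.
            - destruct (le_lt_dec a k); auto. exfalso. apply Hn. exists n.
              rewrite Ea. simpl. lia.
            - exfalso. apply Hn. exists n. rewrite Ea. exact I. }
          specialize (gs2 _ Hle). try rewrite Eg in gs2. exact gs2. }
        destruct Ex as [n En]. eapply ole_trans; [apply fm, En|]. apply H.
Qed.

Definition Wid : W := mkW _ id_tw.
Definition Wtop : W := mkW _ top_tw.
Definition Wjoin (f g : W) : W := mkW _ (join_tw _ _ (wtw f) (wtw g)).
(* Wcomp f g = f g := f o g *)
Definition Wcomp (f g : W) : W := mkW _ (comp_tw _ _ (wtw f) (wtw g)).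

(* [ldiv] = \ and [rdiv] = / are residuals:
   f <= h / g  <->  f g <= h  <->  g <= f \ h *)
Definition residuals (ldiv rdiv : W -> W -> W) : Prop :=
  forall f g h : W,
    (Wle f (rdiv h g) <-> Wle (Wcomp f g) h) /\
    (Wle (Wcomp f g) h <-> Wle g (ldiv f h)).

From Stdlib Require Import Arith Lia Classical Wf_nat FunctionalExtensionality ProofIrrelevance.

(* Both residuals are governed by Galois connections, so lower bounds for them come from
   exhibiting warps below them; the witnesses are the two-step warps [Wstep n c], which vanish
   up to [n] and equal [c] afterwards.  At a point [n+1] with [c = (f\g)(n+1)], according as
   [g(n+1)] is [0], a positive integer or [omega], such a step shows that [c] is bounded by
   [(Tf)^r(n+1)], by [f^r(g(n+1))], or that [g^o(n+1) = omega].  For [g/f] the relevant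
   value is the least [k] with [n+1 <= f k], which is at most [f^l(n+1)]; if there is none,
   then [f^l(n+1) = omega] and hence [(f^l)^o(n+1) = omega].  The reverse inequalities hold
   because [f (Tf)^r] and [(f^l)^o f] vanish: a warp [h] with [T h <= id] is zero. *)

Lemma ole_antisym x y : ole x y -> ole y x -> x = y.
Proof. destruct x, y; simpl; intros; try contradiction; auto. f_equal; lia. Qed.

Lemma ole_om x : ole x om.
Proof. destruct x; exact I. Qed.

Lemma ole_om_eq x : ole om x -> x = om.
Proof. destruct x; simpl; [contradiction | reflexivity]. Qed.

Lemma ole_0 x : ole (fin 0) x.
Proof. destruct x; simpl; auto; lia. Qed.

Lemma ole_fin0_eq x : ole x (fin 0) -> x = fin 0.
Proof. destruct x as [[|a]|]; simpl; intros; auto; lia. Qed.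

Lemma omax_l x y : ole x (omax x y).
Proof. destruct x, y; simpl; auto; lia. Qed.

Lemma omax_r x y : ole y (omax x y).
Proof. destruct x, y; simpl; auto; lia. Qed.

Lemma ole_fin_dec (y : onat) (n : nat) : {ole y (fin n)} + {ole (fin (S n)) y}.
Proof. destruct y as [a|]; simpl; [destruct (le_lt_dec a n); auto | right; exact I]. Qed.

Lemma ole_fin_S_contra y n : ole (fin (S n)) y -> ole y (fin n) -> False.
Proof. intros H1 H2. generalize (ole_trans _ _ _ H1 H2). simpl; lia. Qed.

Lemma Wmono (f : W) x y : ole x y -> ole (f x) (f y).
Proof. apply (tw_mono _ (wtw f)). Qed.

Lemma Wzero (f : W) : f (fin 0) = fin 0.
Proof. apply (tw_zero _ (wtw f)). Qed.

Lemma Wsup (f : W) u : (forall n, ole (f (fin n)) u) -> ole (f om) u.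
Proof. apply (tw_sup _ (wtw f)). Qed.

Lemma W_omax (f : W) a b u : ole (f a) u -> ole (f b) u -> ole (f (omax a b)) u.
Proof.
  intros Ha Hb. destruct a as [a|], b as [b|]; simpl; auto.
  destruct (Nat.max_spec a b) as [[_ ->]|[_ ->]]; auto.
Qed.

Lemma W_ext (f g : W) : (forall x, f x = g x) -> f = g.
Proof.
  destruct f as [f Hf], g as [g Hg]; simpl; intros H.
  apply functional_extensionality in H. subst g.
  f_equal. apply proof_irrelevance.
Qed.

Lemma Wle_antisym (f g : W) : Wle f g -> Wle g f -> f = g.
Proof. intros H1 H2. apply W_ext. intros x. apply ole_antisym; auto. Qed.

Lemma Wle_succ (f g : W) : (forall n, ole (f (fin (S n))) (g (fin (S n)))) -> Wle f g.
Proof.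
  intros H. assert (Hfin : forall n, ole (f (fin n)) (g (fin n))).
  { intros [|n]; [rewrite Wzero; apply ole_0 | apply H]. }
  intros [n|]; [apply Hfin|].
  apply Wsup. intros n. eapply ole_trans; [apply Hfin | apply Wmono, ole_om].
Qed.

Lemma Wle_top (f : W) : Wle f Wtop.
Proof. intros [[|a]|]; simpl; try apply ole_om. rewrite Wzero. simpl; lia. Qed.

Lemma Wcomp_join_le (f k1 k2 h : W) :
  Wle (Wcomp f k1) h -> Wle (Wcomp f k2) h -> Wle (Wcomp f (Wjoin k1 k2)) h.
Proof. intros H1 H2 x. apply W_omax; [apply H1 | apply H2]. Qed.

Lemma Wjoin_comp_le (k1 k2 f h : W) :
  Wle (Wcomp k1 f) h -> Wle (Wcomp k2 f) h -> Wle (Wcomp (Wjoin k1 k2) f) h.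
Proof. intros H1 H2 x. apply omax_le; [apply H1 | apply H2]. Qed.

Lemma comp_top_le_id_zero (h : W) : Wle (Wcomp Wtop h) Wid -> forall x, h x = fin 0.
Proof.
  intros H. assert (Hfin : forall n, h (fin n) = fin 0).
  { intros n. specialize (H (fin n)). cbn in H.
    destruct (h (fin n)) as [[|a]|]; simpl in H; auto; contradiction. }
  intros [n|]; [apply Hfin|].
  apply ole_fin0_eq, Wsup. intros n. rewrite Hfin. apply ole_refl.
Qed.

Definition step (n : nat) (c : onat) (y : onat) : onat :=
  if ole_fin_dec y n then fin 0 else c.

Lemma step_above n c y : ole (fin (S n)) y -> step n c y = c.
Proof.
  intros Hy. unfold step. destruct (ole_fin_dec y n) as [Hy'|]; auto.
  exfalso; exact (ole_fin_S_contra _ _ Hy Hy').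
Qed.

Lemma step_tw n c : timewarp (step n c).
Proof.
  split.
  - intros x y Hxy. unfold step.
    destruct (ole_fin_dec x n) as [|Hx], (ole_fin_dec y n) as [Hy|];
      auto using ole_0, ole_refl.
    exfalso. exact (ole_fin_S_contra _ _ (ole_trans _ _ _ Hx Hxy) Hy).
  - unfold step. destruct (ole_fin_dec (fin 0) n) as [|H]; [reflexivity|simpl in H; lia].
  - rewrite step_above by exact I. split.
    + intros k. unfold step. destruct (ole_fin_dec (fin k) n); auto using ole_0, ole_refl.
    + intros u H. specialize (H (S n)). rewrite step_above in H by (simpl; lia). exact H.
Qed.

Definition Wstep (n : nat) (c : onat) : W := mkW _ (step_tw n c).

Section Residuals.

Variables ldiv rdiv : W -> W -> W.
Hypothesis Hres : residuals ldiv rdiv.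

Lemma ldiv_cancel (f h : W) : Wle (Wcomp f (ldiv f h)) h.
Proof. apply (proj2 (Hres f (ldiv f h) h)). intros x; apply ole_refl. Qed.

Lemma ldiv_greatest (f h k : W) : Wle (Wcomp f k) h -> Wle k (ldiv f h).
Proof. apply (proj2 (Hres f k h)). Qed.

Lemma rdiv_cancel (g h : W) : Wle (Wcomp (rdiv h g) g) h.
Proof. apply (proj1 (Hres (rdiv h g) g h)). intros x; apply ole_refl. Qed.

Lemma rdiv_greatest (g h k : W) : Wle (Wcomp k g) h -> Wle k (rdiv h g).
Proof. apply (proj1 (Hres k g h)). Qed.

Lemma le_ldiv_step (f h : W) n c :
  (forall a, n < a -> ole (f c) (h (fin a))) -> ole c (ldiv f h (fin (S n))).
Proof.
  intros Hc.
  assert (Hs : Wle (Wstep n c) (ldiv f h)).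
  { apply ldiv_greatest. intros y. cbn [wfun Wcomp Wstep]. unfold step.
    destruct (ole_fin_dec y n) as [_|Hy]; [rewrite Wzero; apply ole_0|].
    destruct y as [a|]; [exact (Hc a Hy)|].
    eapply ole_trans; [apply (Hc (S n)); lia | apply Wmono, ole_om]. }
  specialize (Hs (fin (S n))). cbn [wfun Wstep] in Hs.
  rewrite step_above in Hs by (simpl; lia). exact Hs.
Qed.

Lemma le_rdiv_step (g h : W) n c :
  (forall b, ole (fin (S n)) (g b) -> ole c (h b)) -> ole c (rdiv h g (fin (S n))).
Proof.
  intros Hc.
  assert (Hs : Wle (Wstep n c) (rdiv h g)).
  { apply rdiv_greatest. intros b. cbn [wfun Wcomp Wstep]. unfold step.
    destruct (ole_fin_dec (g b) n) as [_|Hb]; [apply ole_0 | exact (Hc b Hb)]. }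
  specialize (Hs (fin (S n))). cbn [wfun Wstep] in Hs.
  rewrite step_above in Hs by (simpl; lia). exact Hs.
Qed.

Lemma ldiv_top_om (h : W) n : h (fin (S n)) = om -> ldiv Wtop h (fin (S n)) = om.
Proof.
  intros Hh. apply ole_om_eq, le_ldiv_step. intros a Ha.
  change (ole om (h (fin a))). rewrite <- Hh. apply Wmono. simpl; lia.
Qed.

Lemma ldiv_le_decomp (f g : W) :
  Wle (ldiv f g)
      (Wjoin (Wjoin (Wcomp (ldiv f Wid) g) (ldiv (Wcomp Wtop f) Wid)) (ldiv Wtop g)).
Proof.
  apply Wle_succ. intros n. set (c := ldiv f g (fin (S n))).
  assert (Hc : ole (f c) (g (fin (S n)))) by exact (ldiv_cancel f g (fin (S n))).
  cbn [wfun Wjoin Wcomp].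
  destruct (g (fin (S n))) as [[|m]|] eqn:Eg.
  - eapply ole_trans; [|apply omax_l]. eapply ole_trans; [|apply omax_r].
    apply le_ldiv_step. intros a _. simpl. rewrite (ole_fin0_eq _ Hc). simpl; lia.
  - eapply ole_trans; [|apply omax_l]. eapply ole_trans; [|apply omax_l].
    apply le_ldiv_step. intros a Ha. eapply ole_trans; [exact Hc | simpl; lia].
  - eapply ole_trans; [|apply omax_r]. rewrite (ldiv_top_om g n Eg). apply ole_om.
Qed.

Lemma decomp_le_ldiv (f g : W) :
  Wle (Wjoin (Wjoin (Wcomp (ldiv f Wid) g) (ldiv (Wcomp Wtop f) Wid)) (ldiv Wtop g))
      (ldiv f g).
Proof.
  apply ldiv_greatest. apply Wcomp_join_le; [apply Wcomp_join_le|].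
  - intros x. exact (ldiv_cancel f Wid (g x)).
  - intros x. rewrite (comp_top_le_id_zero (Wcomp f (ldiv (Wcomp Wtop f) Wid))).
    + apply ole_0.
    + exact (ldiv_cancel (Wcomp Wtop f) Wid).
  - intros x. exact (ole_trans _ _ _ (Wle_top f (ldiv Wtop g x)) (ldiv_cancel Wtop g x)).
Qed.

Lemma rdiv_le_decomp (f g : W) :
  Wle (rdiv g f) (Wjoin (Wcomp g (rdiv Wid f)) (ldiv Wtop (rdiv Wid f))).
Proof.
  apply Wle_succ. intros n. cbn [wfun Wjoin Wcomp].
  destruct (classic (exists k, ole (fin (S n)) (f (fin k)))) as [Hex|Hnone].
  - destruct (dec_inh_nat_subset_has_unique_least_element _ (fun k => classic _) Hex)
      as [k [[Hk Hmin] _]].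
    assert (Hl : ole (fin k) (rdiv Wid f (fin (S n)))).
    { apply le_rdiv_step. intros [b|] Hb; [exact (Hmin b Hb) | exact I]. }
    eapply ole_trans; [|apply omax_l].
    eapply ole_trans; [apply (Wmono _ _ _ Hk)|].
    eapply ole_trans; [apply (rdiv_cancel f g (fin k)) | apply Wmono, Hl].
  - eapply ole_trans; [|apply omax_r]. rewrite ldiv_top_om; [apply ole_om|].
    apply ole_om_eq, le_rdiv_step. intros [b|] Hb; [|exact I].
    exfalso; apply Hnone; exists b; exact Hb.
Qed.

Lemma decomp_le_rdiv (f g : W) :
  Wle (Wjoin (Wcomp g (rdiv Wid f)) (ldiv Wtop (rdiv Wid f))) (rdiv g f).
Proof.
  apply rdiv_greatest. apply Wjoin_comp_le.
  - intros x. exact (Wmono g _ _ (rdiv_cancel f Wid x)).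
  - intros x. rewrite (comp_top_le_id_zero (Wcomp (ldiv Wtop (rdiv Wid f)) f)).
    + apply ole_0.
    + intros z.
      exact (ole_trans _ _ _ (ldiv_cancel Wtop (rdiv Wid f) (f z)) (rdiv_cancel f Wid z)).
Qed.

End Residuals.

Theorem lemma2p4 :
  forall (ldiv rdiv : W -> W -> W),
    residuals ldiv rdiv ->
    forall f g : W,
      ldiv f g =
        Wjoin (Wjoin (Wcomp (ldiv f Wid) g) (ldiv (Wcomp Wtop f) Wid))
              (ldiv Wtop g)
      /\
      rdiv g f = Wjoin (Wcomp g (rdiv Wid f)) (ldiv Wtop (rdiv Wid f)).
Proof.
  intros ldiv rdiv Hres f g. split; apply Wle_antisym.
  - apply (ldiv_le_decomp ldiv rdiv Hres).
  - apply (decomp_le_ldiv ldiv rdiv Hres).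
  - apply (rdiv_le_decomp ldiv rdiv Hres).
  - apply (decomp_le_rdiv ldiv rdiv Hres).
Qed.
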